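(* Let $\mathcal{M}=(E,\mathcal{I},A,w)$ be a weighted uncertainty matroid with $A_e=\{L_e,U_e\}$ for all $e\in E$, and let $M[D,K]$ be a compatible minor of $\mathcal{M}$ that contains no element $e$ with $w_e=U_e$ or $w_e=L_e$. Then $K$ is a minimum-weight basis of $\mathcal{M}$ that can be verified with a minimum-cost certificate. Moreover, if in addition the query costs are uniform and there are reals $L<U$ with $A_e=\{L,U\}$ for all $e\in E$, then every minimum-weight basis $B$ of $\mathcal{M}$ has the same verification cost.
   Context: A weighted uncertainty matroid $\mathcal{M}=(E,\mathcal{I},A,w)$ consists of a matroid $M=(E,\mathcal{I})$ on a finite set $E$, for each $e\in E$ a non-empty finite union $A_e$ of bounded real intervals (each open or closed, single points allowed), a weight $w_e\in A_e$, and a query cost $c_e\ge0$. $L_e=\inf A_e$, $U_e=\sup A_e$. A minimum-weight basis (MWB) is a basis minimizing total weight. A weight assignment is $w^*$ with $w^*_e\in A_e$, consistent with $Q$ if $w^*_e=w_e$ on $Q$. $Q$ verifies an MWB $B$ if for every weight assignment consistent with $Q$, $B$ is an MWB with respect to it; a certificate for $\mathcal{M}$ is a set verifying some MWB; $c^*$ is the minimum cost $\sum_{e\in Q}c_e$ of a certificate for $\mathcal{M}$ (a minimum-cost certificate). The verification cost of an MWB $B$ is the minimum cost of a set verifying $B$. For $D,K\subseteq E$, $M[D,K]$ is the matroid obtained from $M$ by deleting $D$ and contracting $K$, ground set $E\setminus(D\cup K)$. $M[D,K]$ is a compatible minor if there is a set $Q$ of cost $c^*$ verifying an MWB $B$ of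 $\mathcal{M}$ with $K\subseteq B$ and $D\cap B=\emptyset$. *)

From HB Require Import structures.
From mathcomp Require Import all_boot all_order all_algebra.
From mathcomp Require Import reals.
Set Implicit Arguments. Unset Strict Implicit. Unset Printing Implicit Defensive.
Import Order.TTheory GRing.Theory Num.Theory.
Local Open Scope ring_scope.

Section UncertaintyMatroid.
Variable E : finType.

Definition is_matroid (I : {set {set E}}) : Prop :=
  [/\ set0 \in I,
      (forall A B : {set E}, B \in I -> A \subset B -> A \in I) &
      (forall A B : {set E}, A \in I -> B \in I -> (#|A| < #|B|)%N ->
         exists2 e, e \in B :\: A & e |: A \in I)].

Definition is_basis (I : {set {set E}}) (B : {set E}) : Prop :=
  B \in I /\ forall B' : {set E}, B' \in I -> B \subset B' -> B' = B.

Variable R : realType.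

Definition setweight (w : E -> R) (S : {set E}) : R := \sum_(e in S) w e.

Definition is_MWB (I : {set {set E}}) (w : E -> R) (B : {set E}) : Prop :=
  is_basis I B /\ forall B', is_basis I B' -> setweight w B <= setweight w B'.

Definition area (L U : E -> R) (e : E) (x : R) : Prop := x = L e \/ x = U e.

Definition consistent (L U : E -> R) (w : E -> R) (Q : {set E}) (w' : E -> R) : Prop :=
  (forall e, area L U e (w' e)) /\ (forall e, e \in Q -> w' e = w e).

Definition verifies (I : {set {set E}}) (L U w : E -> R) (Q B : {set E}) : Prop :=
  forall w', consistent L U w Q w' -> is_MWB I w' B.

Definition certificate (I : {set {set E}}) (L U w : E -> R) (Q : {set E}) : Prop :=
  exists B, verifies I L U w Q B.

Definition qcost (c : E -> R) (Q : {set E}) : R := \sum_(e in Q) c e.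

Definition min_cost_certificate (I : {set {set E}}) (L U w c : E -> R) (Q : {set E}) : Prop :=
  certificate I L U w Q /\
  forall Q', certificate I L U w Q' -> qcost c Q <= qcost c Q'.

Definition verification_cost (I : {set {set E}}) (L U w c : E -> R) (B : {set E}) (x : R) : Prop :=
  (exists2 Q, verifies I L U w Q B & qcost c Q = x) /\
  forall Q, verifies I L U w Q B -> x <= qcost c Q.

Definition compatible_minor (I : {set {set E}}) (L U w c : E -> R) (D K : {set E}) : Prop :=
  exists Q B, [/\ min_cost_certificate I L U w c Q, verifies I L U w Q B,
     is_MWB I w B, K \subset B & [disjoint D & B]].

End UncertaintyMatroid.

(* Since every area is {L_e, U_e}, an element outside D and K would have a weight
   strictly inside its area; so D and K cover E and the MWB B with K <= B and
   B disjoint from D is K itself.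

   For the second claim, Q verifies B iff B is an MWB for the single assignment
   keeping the queried weights and putting the unqueried elements at U inside B
   and at L outside.  When all areas equal {L0, U0}, two elements f in B and g
   outside B with w f = w g are interchangeable: if g + B - f is a basis, it is
   verified by Q with the roles of f and g swapped.  Walking from one MWB to
   another through such equal-weight exchanges transports any verifier to one of
   the same size, and uniform costs make equal sizes equal costs. *)

From HB Require Import structures.
From mathcomp Require Import all_boot all_order all_algebra.
From mathcomp Require Import reals.
From mathcomp Require Import lra perm.
Set Implicit Arguments. Unset Strict Implicit. Unset Printing Implicit Defensive.
Import Order.TTheory GRing.Theory Num.Theory.
Local Open Scope ring_scope.

Section MatroidBases.
Variables (E : finType) (I : {set {set E}}).
Hypothesis matroidI : is_matroid I.

Lemma basis_mem_of_indep B z : is_basis I B -> z |: B \in I -> z \in B.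
Proof. by move=> [_ maxB] zBI; rewrite -(maxB _ zBI (subsetUr _ _)) setU11. Qed.

Lemma card_basis B1 B2 : is_basis I B1 -> is_basis I B2 -> #|B1| = #|B2|.
Proof.
case: matroidI => _ _ augment.
have le_basis X Y : is_basis I X -> is_basis I Y -> (#|X| <= #|Y|)%N.
  move=> X_basis Y_basis; rewrite leqNgt; apply/negP => /(augment _ _ Y_basis.1 X_basis.1).
  case=> z; rewrite inE => /andP[zNY _] /(basis_mem_of_indep Y_basis).
  exact/negP.
by move=> B1_basis B2_basis; apply/eqP; rewrite eqn_leq !le_basis.
Qed.

Lemma indep_card_basis B A :
  is_basis I B -> A \in I -> (#|B| <= #|A|)%N -> is_basis I A.
Proof.
case: matroidI => _ _ augment B_basis AI leBA; split=> // A' A'I sAA'.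
apply/eqP; rewrite eq_sym eqEcard sAA' leqNgt; apply/negP => ltAA'.
have [z] := augment _ _ B_basis.1 A'I (leq_ltn_trans leBA ltAA').
rewrite inE => /andP[zNB _] /(basis_mem_of_indep B_basis); exact/negP.
Qed.

Lemma basis_exchange B1 B2 x :
  is_basis I B1 -> is_basis I B2 -> x \in B1 -> x \notin B2 ->
  exists2 y, y \in B2 :\: B1 & is_basis I (y |: (B1 :\ x)).
Proof.
move=> B1_basis B2_basis xB1 xNB2.
have [_ subI augment] := matroidI.
have cardB1x : #|B1 :\ x| = #|B1|.-1 by rewrite (cardsD1 x B1) xB1.
have B1_gt0 : (0 < #|B1|)%N by apply/card_gt0P; exists x.
have [|y] := augment _ _ (subI _ _ B1_basis.1 (subD1set B1 x)) B2_basis.1.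
  by rewrite cardB1x -(card_basis B1_basis B2_basis) ltn_predL.
rewrite !inE => /andP[yNB1x yB2] yB1xI.
have yx : y != x by apply: contraNneq xNB2 => <-.
have yNB1 : y \notin B1 by move: yNB1x; rewrite yx.
exists y; first by rewrite inE yNB1.
apply: indep_card_basis B1_basis yB1xI _.
by rewrite cardsU1 !inE yx yNB1 cardB1x add1n prednK.
Qed.

End MatroidBases.

Section SetExchange.
Variable E : finType.
Implicit Types (A B : {set E}) (x y : E).

Lemma setD_exchangel A B x y : y \in B -> (y |: (A :\ x)) :\: B = (A :\: B) :\ x.
Proof.
move=> yB; apply/setP => z; rewrite !inE.
by case: (eqVneq z y) => [->|]; rewrite ?yB ?andbF //= andbCA.
Qed.

Lemma setD_exchanger A B x y : y \notin A -> A :\: (x |: (B :\ y)) = (A :\: B) :\ x.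
Proof.
move=> yNA; apply/setP => z; rewrite !inE negb_or negb_and negbK.
by case: (eqVneq z y) => [->|] /=; rewrite ?(negbTE yNA) ?andbF // -andbA.
Qed.

Lemma exchangeK B x y : y \in B -> x \notin B -> y |: ((x |: (B :\ y)) :\ x) = B.
Proof.
move=> yB xNB; apply/setP => z; rewrite !inE.
case: (eqVneq z y) => [->|] //=; case: (eqVneq z x) => [->|] //=.
by rewrite (negbTE xNB).
Qed.

Lemma card_setD1_lt A x : x \in A -> (#|A :\ x| < #|A|)%N.
Proof. by move=> xA; rewrite (cardsD1 x A) xA. Qed.

End SetExchange.

Section MinimumWeightBases.
Variables (E : finType) (R : realType) (I : {set {set E}}).
Implicit Types (W : E -> R) (B S : {set E}).

Lemma eq_setweight W1 W2 S : W1 =1 W2 -> setweight W1 S = setweight W2 S.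
Proof. by move=> eqW; apply: eq_bigr => e _. Qed.

Lemma eq_MWB W1 W2 B : W1 =1 W2 -> is_MWB I W1 B -> is_MWB I W2 B.
Proof.
move=> eqW [B_basis minB]; split=> // B' B'_basis.
by rewrite -!(eq_setweight _ eqW); apply: minB.
Qed.

Lemma setweight_sub W B1 B2 :
  setweight W B2 - setweight W B1 = setweight W (B2 :\: B1) - setweight W (B1 :\: B2).
Proof.
rewrite /setweight (big_setID B1 (A := B2)) (big_setID B2 (A := B1)) /= setIC.
lra.
Qed.

Lemma setweight_exchange W B f g : f \in B -> g \notin B ->
  setweight W (g |: (B :\ f)) = setweight W B - W f + W g.
Proof.
move=> fB gNB; rewrite /setweight (big_setD1 f fB) big_setU1 /=; last first.
  by rewrite !inE (negbTE gNB) andbF.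
lra.
Qed.

Lemma MWB_exchange_le W B f g : is_MWB I W B -> f \in B -> g \notin B ->
  is_basis I (g |: (B :\ f)) -> W f <= W g.
Proof.
move=> [_ minB] fB gNB /minB; rewrite setweight_exchange //; lra.
Qed.

Lemma MWB_exchange W B f g : is_MWB I W B -> f \in B -> g \notin B ->
  is_basis I (g |: (B :\ f)) -> W f = W g -> is_MWB I W (g |: (B :\ f)).
Proof.
move=> [_ minB] fB gNB B'_basis eqWfg; split=> // B2 /minB.
rewrite setweight_exchange // eqWfg; lra.
Qed.

End MinimumWeightBases.

Section Verification.
Variables (E : finType) (R : realType) (I : {set {set E}}) (L U w : E -> R).
Hypothesis L_le_U : forall e, L e <= U e.
Hypothesis w_area : forall e, area L U e (w e).
Implicit Types (Q B : {set E}) (v : E -> R).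

Lemma area_ge e x : area L U e x -> L e <= x.
Proof. by case=> ->. Qed.

Lemma area_le e x : area L U e x -> x <= U e.
Proof. by case=> ->. Qed.

(* The assignment consistent with Q that is least favourable to B. *)
Definition worst_case Q B e : R :=
  if e \in Q then w e else if e \in B then U e else L e.

Lemma worst_case_consistent Q B : consistent L U w Q (worst_case Q B).
Proof.
split=> e; rewrite /worst_case; last by move->.
by case: ifP => _ //; case: ifP => _; [right | left].
Qed.

Lemma consistent_self Q : consistent L U w Q w.
Proof. by []. Qed.

Lemma worst_case_ge Q B v e :
  consistent L U w Q v -> e \in B -> v e <= worst_case Q B e.
Proof.
case=> v_area v_Q eB; rewrite /worst_case eB.
by case: ifP => [/v_Q -> // | _]; apply: area_le.
Qed.

Lemma worst_case_le Q B v e :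
  consistent L U w Q v -> e \notin B -> worst_case Q B e <= v e.
Proof.
case=> v_area v_Q eNB; rewrite /worst_case (negbTE eNB).
by case: ifP => [/v_Q -> // | _]; apply: area_ge.
Qed.

Lemma verifiesP Q B : verifies I L U w Q B <-> is_MWB I (worst_case Q B) B.
Proof.
split=> [verB | [B_basis minB] v v_cons]; first exact/verB/worst_case_consistent.
split=> // B2 /minB; rewrite -subr_ge0 (setweight_sub _ B) => le_wc.
rewrite -subr_ge0 (setweight_sub _ B).
have le_out : setweight (worst_case Q B) (B2 :\: B) <= setweight v (B2 :\: B).
  by apply: ler_sum => e; rewrite inE => /andP[eNB _]; apply: worst_case_le.
have le_in : setweight v (B :\: B2) <= setweight (worst_case Q B) (B :\: B2).
  by apply: ler_sum => e; rewrite inE => /andP[_ eB]; apply: worst_case_ge.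
lra.
Qed.

Lemma verifies_MWB Q B : verifies I L U w Q B -> is_MWB I w B.
Proof. by apply; apply: consistent_self. Qed.

Lemma worst_case_exchange Q B f g :
  f \in B -> g \notin B -> L f = L g -> U f = U g -> w f = w g ->
  worst_case Q B f = worst_case Q B g ->
  worst_case (tperm f g @^-1: Q) (g |: (B :\ f)) =1 worst_case Q B.
Proof.
move=> fB gNB eqL eqU eqw eq_wc x; have fg : f != g by apply: contraNneq gNB => <-.
rewrite /worst_case !inE.
case: (eqVneq x f) => [-> | xf].
  by move: eq_wc; rewrite /worst_case tpermL fB (negbTE gNB) (negbTE fg) eqw eqL /= => ->.
case: (eqVneq x g) => [-> | xg].
  by move: eq_wc; rewrite /worst_case tpermR fB (negbTE gNB) eqw eqU => <-.
by rewrite tpermD // eq_sym.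
Qed.

Lemma verifies_exchange Q B f g :
  verifies I L U w Q B -> f \in B -> g \notin B -> is_basis I (g |: (B :\ f)) ->
  L f = L g -> U f = U g -> w f = w g ->
  exists2 Q', verifies I L U w Q' (g |: (B :\ f)) & #|Q'| = #|Q|.
Proof.
move=> /verifiesP B_MWB fB gNB B'_basis eqL eqU eqw.
exists (tperm f g @^-1: Q); last by rewrite card_preimset //; apply: perm_inj.
have eq_wc : worst_case Q B f = worst_case Q B g.
  apply/le_anti; rewrite (MWB_exchange_le B_MWB) //=.
  have := worst_case_ge (consistent_self Q) fB.
  have := worst_case_le (consistent_self Q) gNB; lra.
apply/verifiesP/(eq_MWB (fsym (worst_case_exchange fB gNB eqL eqU eqw eq_wc))).
exact: MWB_exchange.
Qed.

End Verification.

Section UniformAreas.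
Variables (E : finType) (R : realType) (I : {set {set E}}) (L U w : E -> R) (L0 U0 : R).
Hypothesis matroidI : is_matroid I.
Hypothesis L_le_U : forall e, L e <= U e.
Hypothesis w_area : forall e, area L U e (w e).
Hypotheses (L_unif : forall e, L e = L0) (U_unif : forall e, U e = U0).

(* An exchange x -> y from B1 towards B2 has w x <= w y;
   if equal, move the verifier to B1 - x + y.  Otherwise w y = U0, so the reverse
   exchange y -> x' from B2 is between equal weights: B2 - y + x' is an MWB closer
   to B1, and its verifier is moved back to B2. *)
Lemma verifier_transport B1 B2 Q :
  is_MWB I w B2 -> verifies I L U w Q B1 ->
  exists2 Q', verifies I L U w Q' B2 & #|Q'| = #|Q|.
Proof.
have eqL a b : L a = L b by rewrite !L_unif.
have eqU a b : U a = U b by rewrite !U_unif.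
move: {2}#|B1 :\: B2|.+1 (ltnSn #|B1 :\: B2|) => n.
elim: n B1 B2 Q => [//|n IHn] B1 B2 Q ltn B2_MWB verB1.
have B1_MWB := verifies_MWB w_area verB1.
have [B1B2_0 | [x xB1B2]] := set_0Vmem (B1 :\: B2).
  exists Q => //; suff -> : B2 = B1 by [].
  by apply: B1_MWB.1.2 B2_MWB.1.1 _; rewrite -setD_eq0 B1B2_0.
have ltn_D1 z : z \in B1 :\: B2 -> (#|(B1 :\: B2) :\ z| < n)%N.
  by move/card_setD1_lt/leq_trans; apply.
move: (xB1B2); rewrite inE => /andP[xNB2 xB1].
have [y yB2B1 B3_basis] := basis_exchange matroidI B1_MWB.1 B2_MWB.1 xB1 xNB2.
move: (yB2B1); rewrite inE => /andP[yNB1 yB2].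
have le_xy := MWB_exchange_le B1_MWB xB1 yNB1 B3_basis.
have [eq_xy | ne_xy] := eqVneq (w x) (w y).
  have [Q3 verB3 <-] := verifies_exchange L_le_U w_area verB1 xB1 yNB1 B3_basis
    (eqL _ _) (eqU _ _) eq_xy.
  by apply: IHn verB3; rewrite // setD_exchangel // ltn_D1.
have [x' x'B1B2 B4_basis] := basis_exchange matroidI B2_MWB.1 B1_MWB.1 yB2 yNB1.
move: (x'B1B2); rewrite inE => /andP[x'NB2 x'B1].
have lt_xy : w x < w y by rewrite lt_neqAle ne_xy le_xy.
have eq_yx' : w y = w x'.
  move: lt_xy; have := MWB_exchange_le B2_MWB yB2 x'NB2 B4_basis.
  have := area_ge L_le_U (w_area x); have := area_le L_le_U (w_area x').
  by case: (w_area y); rewrite !L_unif !U_unif => ->; lra.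
have B4_MWB := MWB_exchange B2_MWB yB2 x'NB2 B4_basis eq_yx'.
have [Q4 verB4 <-] : exists2 Q4, verifies I L U w Q4 (x' |: (B2 :\ y)) & #|Q4| = #|Q|.
  by apply: IHn B4_MWB verB1; rewrite setD_exchanger // ltn_D1.
have yNB4 : y \notin x' |: (B2 :\ y).
  by rewrite !inE eqxx orbF; apply: contraNneq yNB1 => ->.
have := verifies_exchange L_le_U w_area verB4 (setU11 x' _) yNB4 _ (eqL _ _) (eqU _ _) (esym eq_yx').
by rewrite exchangeK //; apply; exact: B2_MWB.1.
Qed.

End UniformAreas.

Lemma qcost_uniform (E : finType) (R : realType) (c : E -> R) (Q1 Q2 : {set E}) :
  (forall e e', c e = c e') -> #|Q1| = #|Q2| -> qcost c Q1 = qcost c Q2.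
Proof.
move=> c_unif eq_card.
have [e0 _ | E_0] := pickP (fun _ : E => true); last first.
  by rewrite /qcost !big_pred0 // => e; have := E_0 e.
have qcostE Q : qcost c Q = c e0 *+ #|Q|.
  by rewrite /qcost (eq_bigr (fun=> c e0)) ?sumr_const // => e _; apply: c_unif.
by rewrite !qcostE eq_card.
Qed.

Lemma empty_compatible_minor (E : finType) (R : realType) (I : {set {set E}})
    (L U w c : E -> R) (D K : {set E}) :
  compatible_minor I L U w c D K -> D :|: K = [set: E] ->
  is_MWB I w K /\ exists Q, min_cost_certificate I L U w c Q /\ verifies I L U w Q K.
Proof.
move=> [Q [B [minQ verB B_MWB sKB disDB]]] DK_full.
suff <- : B = K by split=> //; exists Q.
apply/eqP; rewrite eqEsubset sKB andbT; apply/subsetP => e eB.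
have := in_setT e; rewrite -DK_full inE => /orP[eD | //].
by rewrite (disjointFr disDB eD) in eB.
Qed.

Theorem corollary23 (E : finType) (R : realType) (I : {set {set E}})
    (L U w c : E -> R) (D K : {set E}) :
  is_matroid I ->
  (forall e, L e <= U e) ->
  (forall e, area L U e (w e)) ->
  (forall e, 0 <= c e) ->
  compatible_minor I L U w c D K ->
  (forall e, e \notin D :|: K -> w e <> U e /\ w e <> L e) ->
  (is_MWB I w K /\
   exists Q, min_cost_certificate I L U w c Q /\ verifies I L U w Q K) /\
  ((forall e e', c e = c e') ->
   (exists L0 U0 : R, L0 < U0 /\ forall e, L e = L0 /\ U e = U0) ->
   forall B1 B2 x1 x2, is_MWB I w B1 -> is_MWB I w B2 ->
     verification_cost I L U w c B1 x1 -> verification_cost I L U w c B2 x2 ->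
     x1 = x2).
Proof.
move=> matroidI L_le_U w_area _ compatDK DK_extreme; split.
  apply: empty_compatible_minor compatDK _; apply/setP => e; rewrite in_setT.
  by apply/negPn/negP => /DK_extreme[neU neL]; case: (w_area e).
move=> c_unif [L0 [U0 [_ LU_unif]]] B1 B2 x1 x2 B1_MWB B2_MWB.
have L_unif e : L e = L0 by case: (LU_unif e).
have U_unif e : U e = U0 by case: (LU_unif e).
have transport := verifier_transport matroidI L_le_U w_area L_unif U_unif.
move=> [[Q1 verQ1 <-] minQ1] [[Q2 verQ2 <-] minQ2].
have [Q21 ver21 card21] := transport _ _ _ B1_MWB verQ2.
have [Q12 ver12 card12] := transport _ _ _ B2_MWB verQ1.
apply/le_anti/andP; split.
  by rewrite -(qcost_uniform c_unif card21); apply: minQ1.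
by rewrite -(qcost_uniform c_unif card12); apply: minQ2.
Qed.
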